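(* Under the hypotheses of Theorem 1 (stated in the context), with probability one there exists $n_0$ such that for all $n\ge n_0$, denoting by $\hat m_{n,1}<\dots<\hat m_{n,r-1}$ the local minimizers of $\hat f_n$ in $(a,b)$ and by $F$ the distribution function of $P$, $$d_P(\widehat{\mathscr C}_n,\mathscr C_0)=\sum_{j=1}^{r-1}\bigl|F(\hat m_{n,j})-F(m_j)\bigr|.$$
   Context: Hypotheses: $P$ is a probability distribution on $\mathbb R$ with density $f$, $f=0$ outside $[a,b]$ ($a<b$), $f|_{[a,b]}$ is three times continuously differentiable on $[a,b]$, $f'(a)\ne0$, $f'(b)\ne0$, $f$ has finitely many critical points in $(a,b)$, all with $f''\neq0$; $m_1<\dots<m_{r-1}$ are the local minimizers of $f$ in $(a,b)$. $(\hat f_n)$ are random functions, each twice continuously differentiable on $[a,b]$, with $\sup_{[a,b]}|\hat f_n^{(j)}-f^{(j)}|\to0$ almost surely for $j=1,2$. Modal clustering induced by $g$: if $g$ has finitely many local minimizers $\mu_1<\dots<\mu_k$ in $(a,b)$, it is $\{(-\infty,\mu_1),(\mu_1,\mu_2),\dots,(\mu_k,\infty)\}$; $\mathscr C_0$ and $\widehat{\mathscr C}_n$ are those induced by $f$ and $\hat f_n$. For $P$-clusterings $\mathscr C=\{C_1,\dots,C_r\}$, $\mathscr D=\{D_1,\dots,D_s\}$ with $r\le s$, put $C_i=\varnothing$ for $r<i\le s$ and $d_P(\mathscr C,\mathscr D)=\frac12\min_\sigma\sum_{i=1}^sP(C_i\triangle D_{\sigma(i)})$ over permutations $\sigma$ of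 $\{1,\dots,s\}$. *)

From Stdlib Require Import Reals Lra List Sorted ClassicalEpsilon.
Import ListNotations.
Open Scope R_scope.

(* Riemann integral of g over [u,v]; 0 if g is not Riemann integrable there
   (for all uses below the integrand is integrable). *)
Definition Rint (g : R -> R) (u v : R) : R :=
  match excluded_middle_informative (inhabited (Riemann_integrable g u v)) with
  | left h => RiemannInt (epsilon h (fun _ => True))
  | right _ => 0
  end.

(* Probability of a set A under the law with density f vanishing off [a,b]. *)
Definition Prob (f : R -> R) (a b : R) (A : R -> Prop) : R :=
  Rint (fun x => match excluded_middle_informative (A x) with
                 | left _ => f x | right _ => 0 end) a b.

Definition distr_fun (f : R -> R) (a b : R) (x : R) : R :=
  Prob f a b (fun y => y <= x).

Definition symdiff (A B : R -> Prop) : R -> Prop :=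
  fun x => (A x /\ ~ B x) \/ (B x /\ ~ A x).

(* one-sided-at-endpoints derivative within [a,b] *)
Definition deriv_on (g g' : R -> R) (a b : R) : Prop :=
  forall x, a <= x <= b -> forall eps, 0 < eps -> exists delta, 0 < delta /\
    forall h, h <> 0 -> Rabs h < delta -> a <= x + h <= b ->
      Rabs ((g (x + h) - g x) / h - g' x) < eps.

Definition cont_on (g : R -> R) (a b : R) : Prop :=
  forall x, a <= x <= b -> forall eps, 0 < eps -> exists delta, 0 < delta /\
    forall y, a <= y <= b -> Rabs (y - x) < delta -> Rabs (g y - g x) < eps.

Definition is_local_min (g : R -> R) (x : R) : Prop :=
  exists delta, 0 < delta /\ forall y, Rabs (y - x) < delta -> g x <= g y.

(* Modal clustering induced by the sorted list mu1 < ... < muk of local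
   minimizers: (-oo,mu1), (mu1,mu2), ..., (muk, +oo). *)
Fixpoint clusters_from (lo : option R) (mu : list R) : list (R -> Prop) :=
  match mu with
  | [] => [fun x => match lo with None => True | Some l => l < x end]
  | m :: mu' =>
      (fun x => (match lo with None => True | Some l => l < x end) /\ x < m)
        :: clusters_from (Some m) mu'
  end.

Definition modal_clustering (mu : list R) : list (R -> Prop) :=
  clusters_from None mu.

Fixpoint inserts {A : Type} (x : A) (l : list A) : list (list A) :=
  match l with
  | [] => [[x]]
  | y :: l' => (x :: y :: l') :: map (cons y) (inserts x l')
  end.

Fixpoint perms {A : Type} (l : list A) : list (list A) :=
  match l with
  | [] => [[]]
  | x :: l' => flat_map (inserts x) (perms l')
  end.

Definition sumR (l : list R) : R := fold_right Rplus 0 l.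
Definition minR (l : list R) : R := fold_right Rmin (hd 0 l) l.

Definition pad (n : nat) (C : list (R -> Prop)) : list (R -> Prop) :=
  C ++ repeat (fun _ => False) (n - length C).

Definition dP (f : R -> R) (a b : R) (C D : list (R -> Prop)) : R :=
  let s := Nat.max (length C) (length D) in
  let C' := pad s C in
  let D' := pad s D in
  / 2 * minR (map (fun D'' =>
                     sumR (map (fun p => Prob f a b (symdiff (fst p) (snd p)))
                               (combine C' D'')))
                  (perms D')).

(* The local minimizers of f are exactly its critical points in (a,b) with f'' > 0.
   Uniform convergence of the first two derivatives gives, for large n, exactly one
   critical point of f̂_n near each m_j, which is a local minimizer, and no local
   minimizer elsewhere, since away from the m_j either |f'| or -f'' is bounded below;
   hence m̂_{n,j} -> m_j.  Once every m̂_{n,j} is close to m_j, the j-th clusters of the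
   two clusterings differ by two thin intervals of masses |F(m̂_{n,j-1}) - F(m_{j-1})|
   and |F(m̂_{n,j}) - F(m_j)|, so matching clusters by index costs twice the asserted
   sum, which is small, while any other matching pairs some cluster with a disjoint
   one and costs at least the mass of a fixed core interval.  That mass is positive
   because f cannot vanish on an interval without a degenerate critical point. *)

From Stdlib Require Import Reals Lra Lia List Sorted ClassicalEpsilon Classical.
From Coquelicot Require Import Coquelicot.
Import ListNotations.
Open Scope R_scope.

Lemma continuity_pt_intro (g : R -> R) x :
  (forall eps, 0 < eps -> exists d, 0 < d /\
     forall y, Rabs (y - x) < d -> Rabs (g y - g x) < eps) ->
  continuity_pt g x.
Proof.
  intros H eps He. destruct (H eps He) as [d [Hd H']].
  exists d. split; [lra|]. intros y [_ Hy]. exact (H' y Hy).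
Qed.

Lemma continuity_pt_elim (g : R -> R) x : continuity_pt g x ->
  forall eps, 0 < eps -> exists d, 0 < d /\
    forall y, Rabs (y - x) < d -> Rabs (g y - g x) < eps.
Proof.
  intros H eps He. destruct (H eps He) as [d [Hd H']].
  exists d. split; [lra|]. intros y Hy. destruct (Req_dec y x) as [->|Hne].
  - rewrite Rminus_diag, Rabs_R0; lra.
  - apply (H' y). split; [split; [exact I | congruence] | exact Hy].
Qed.

Lemma continuity_pt_tent r c x : continuity_pt (fun y => Rmax 0 (r - Rabs (y - c))) x.
Proof.
  apply continuity_pt_intro. intros eps He. exists eps. split; [exact He|].
  intros y Hy. eapply Rle_lt_trans; [|exact Hy].
  unfold Rmax; repeat destruct Rle_dec; unfold Rabs in *; repeat destruct Rcase_abs; lra.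
Qed.

(* Composing with clamp extends a function on [a,b] by its boundary values, so
   continuity on [a,b] becomes continuity on the whole line. *)
Definition clamp (a b x : R) := Rmax a (Rmin b x).

Ltac clamp_lra := unfold clamp, Rmax, Rmin in *; repeat destruct Rle_dec; try lra.

Lemma clamp_in a b x : a <= b -> a <= clamp a b x <= b.
Proof. intros. clamp_lra. Qed.

Lemma clamp_id a b x : a <= x <= b -> clamp a b x = x.
Proof. intros. clamp_lra. Qed.

Lemma Rabs_clamp_le a b x y : a <= b -> Rabs (clamp a b y - clamp a b x) <= Rabs (y - x).
Proof. intros. clamp_lra; unfold Rabs; repeat destruct Rcase_abs; lra. Qed.

Lemma continuity_pt_clamp g a b : a <= b -> cont_on g a b ->
  forall x, continuity_pt (fun y => g (clamp a b y)) x.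
Proof.
  intros Hab H x. apply continuity_pt_intro. intros eps He.
  destruct (H (clamp a b x) (clamp_in a b x Hab) eps He) as [d [Hd Hd']].
  exists d. split; [exact Hd|]. intros y Hy.
  apply Hd'; [apply clamp_in; exact Hab|].
  eapply Rle_lt_trans; [apply Rabs_clamp_le; exact Hab | exact Hy].
Qed.

Lemma deriv_on_cont_on g g' a b : deriv_on g g' a b -> cont_on g a b.
Proof.
  intros H x Hx eps He.
  destruct (H x Hx 1 Rlt_0_1) as [d [Hd Hd']].
  set (K := Rabs (g' x) + 1).
  assert (HK : 0 < K) by (unfold K; pose proof (Rabs_pos (g' x)); lra).
  exists (Rmin d (eps / K)). split.
  { apply Rmin_glb_lt; [lra | apply Rdiv_lt_0_compat; lra]. }
  intros y Hy Hyx.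
  destruct (Req_dec y x) as [->|Hne]; [rewrite Rminus_diag, Rabs_R0; lra|].
  set (h := y - x).
  assert (Hh : h <> 0) by (unfold h; lra).
  assert (Hhd : Rabs h < d) by (eapply Rlt_le_trans; [exact Hyx | apply Rmin_l]).
  assert (Hhe : Rabs h * K < eps).
  { apply (Rmult_lt_reg_r (/ K)); [apply Rinv_0_lt_compat; lra|].
    replace (Rabs h * K * / K) with (Rabs h) by (field; lra).
    eapply Rlt_le_trans; [exact Hyx | apply Rmin_r]. }
  specialize (Hd' h Hh Hhd). replace (x + h) with y in Hd' by (unfold h; ring).
  specialize (Hd' Hy).
  replace (g y - g x) with (((g y - g x) / h - g' x) * h + g' x * h) by (field; exact Hh).
  eapply Rle_lt_trans; [apply Rabs_triang|]. rewrite !Rabs_mult.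
  unfold K in Hhe. pose proof (Rabs_pos h). nra.
Qed.

Lemma deriv_on_opp g g' a b : deriv_on g g' a b ->
  deriv_on (fun x => - g x) (fun x => - g' x) a b.
Proof.
  intros H x Hx eps He. destruct (H x Hx eps He) as [d [Hd Hd']].
  exists d. split; [exact Hd|]. intros h Hh Hhd Hxh.
  replace ((- g (x + h) - - g x) / h - - g' x) with (- ((g (x + h) - g x) / h - g' x))
    by (field; exact Hh).
  rewrite Rabs_Ropp. apply Hd'; assumption.
Qed.

Lemma deriv_on_derivable_pt_lim g g' a b x : deriv_on g g' a b -> a < x < b ->
  derivable_pt_lim g x (g' x).
Proof.
  intros H Hx eps He.
  destruct (H x ltac:(lra) eps He) as [d [Hd Hd']].
  assert (Hp : 0 < Rmin d (Rmin (x - a) (b - x))) by (repeat apply Rmin_glb_lt; lra).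
  exists (mkposreal _ Hp). intros h Hh Hhd. simpl in Hhd.
  pose proof (Rmin_l d (Rmin (x - a) (b - x))). pose proof (Rmin_r d (Rmin (x - a) (b - x))).
  pose proof (Rmin_l (x - a) (b - x)). pose proof (Rmin_r (x - a) (b - x)).
  apply Hd'; [exact Hh | lra |]. revert Hhd. unfold Rabs; destruct Rcase_abs; lra.
Qed.

Lemma deriv_on_pos_increasing g g' a b u v : deriv_on g g' a b -> a < u -> u < v -> v < b ->
  (forall x, u < x < v -> 0 < g' x) -> g u < g v.
Proof.
  intros H Hu Huv Hv Hpos.
  destruct (MVT_cor2 g g' u v Huv) as [c [Hc Hcuv]].
  { intros c Hc. apply (deriv_on_derivable_pt_lim g g' a b); [exact H | lra]. }
  specialize (Hpos c Hcuv). nra.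
Qed.

Lemma deriv_on_neg_decreasing g g' a b u v : deriv_on g g' a b -> a < u -> u < v -> v < b ->
  (forall x, u < x < v -> g' x < 0) -> g v < g u.
Proof.
  intros H Hu Huv Hv Hneg.
  enough (- g u < - g v) by lra.
  apply (deriv_on_pos_increasing _ _ a b u v (deriv_on_opp g g' a b H)); try assumption.
  intros x Hx. specialize (Hneg x Hx). lra.
Qed.

Lemma deriv_on_sign_change g g' a b c : deriv_on g g' a b -> a < c < b ->
  g c = 0 -> 0 < g' c ->
  exists d, 0 < d /\ a < c - d /\ c + d < b /\
    (forall x, c < x < c + d -> 0 < g x) /\ (forall x, c - d < x < c -> g x < 0).
Proof.
  intros H Hc Hg0 Hpos.
  assert (Hhalf : 0 < g' c / 2) by lra.
  destruct (H c ltac:(lra) _ Hhalf) as [d [Hd Hq]].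
  set (d' := Rmin d (Rmin (c - a) (b - c)) / 2).
  pose proof (Rmin_l d (Rmin (c - a) (b - c))). pose proof (Rmin_r d (Rmin (c - a) (b - c))).
  pose proof (Rmin_l (c - a) (b - c)). pose proof (Rmin_r (c - a) (b - c)).
  assert (0 < Rmin d (Rmin (c - a) (b - c))) by (repeat apply Rmin_glb_lt; lra).
  (* the difference quotient g x / (x - c) stays above g' c / 2 *)
  assert (Hquot : forall x, 0 < Rabs (x - c) < d' -> 0 < g x / (x - c)).
  { intros x [Hx0 Hx]. assert (Hne : x - c <> 0) by (intro E; rewrite E, Rabs_R0 in Hx0; lra).
    specialize (Hq (x - c) Hne ltac:(unfold d' in Hx; lra)).
    replace (c + (x - c)) with x in Hq by ring.
    assert (Hxab : a <= x <= b) by (revert Hx; unfold d', Rabs; destruct Rcase_abs; lra).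
    specialize (Hq Hxab). rewrite Hg0, Rminus_0_r in Hq.
    apply Rabs_def2 in Hq. lra. }
  exists d'. unfold d' at 1 2 3. repeat split; try lra.
  - intros x Hx. specialize (Hquot x ltac:(rewrite Rabs_right; lra)).
    replace (g x) with (g x / (x - c) * (x - c)) by (field; lra). nra.
  - intros x Hx. specialize (Hquot x ltac:(rewrite Rabs_left; lra)).
    replace (g x) with (g x / (x - c) * (x - c)) by (field; lra). nra.
Qed.

Lemma local_min_deriv_eq0 g g' a b c : deriv_on g g' a b -> a < c < b ->
  is_local_min g c -> g' c = 0.
Proof.
  intros H Hc [d [Hd Hmin]].
  pose proof (deriv_on_derivable_pt_lim g g' a b c H Hc) as Hl.
  rewrite <- (derive_pt_eq_0 g c (g' c) (exist _ (g' c) Hl) Hl).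
  apply (deriv_minimum g (c - d) (c + d) c); try lra.
  intros x Hx1 Hx2. apply Hmin. apply Rabs_def1; lra.
Qed.

Lemma local_min_deriv2_ge0 g g' g'' a b c : deriv_on g g' a b -> deriv_on g' g'' a b ->
  a < c < b -> is_local_min g c -> 0 <= g'' c.
Proof.
  intros H1 H2 Hc Hmin. apply Rnot_lt_le. intros Hneg.
  pose proof (local_min_deriv_eq0 g g' a b c H1 Hc Hmin) as E.
  destruct Hmin as [dl [Hdl Hl]].
  assert (Hopp : 0 < - g'' c) by lra.
  destruct (deriv_on_sign_change _ _ a b c (deriv_on_opp _ _ a b H2) Hc
              ltac:(cbv beta; rewrite E; ring) Hopp) as [d [Hd [Hd1 [Hd2 [Hright _]]]]].
  set (h := Rmin d dl / 2).
  assert (0 < Rmin d dl) by (apply Rmin_glb_lt; lra).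
  pose proof (Rmin_l d dl). pose proof (Rmin_r d dl).
  assert (g (c + h) < g c).
  { apply (deriv_on_neg_decreasing g g' a b c (c + h) H1); try (unfold h; lra).
    intros x Hx. specialize (Hright x ltac:(unfold h in Hx; lra)). lra. }
  assert (g c <= g (c + h)) by (apply Hl; rewrite Rabs_right; unfold h; lra).
  lra.
Qed.

Lemma deriv2_pos_local_min g g' g'' a b c : deriv_on g g' a b -> deriv_on g' g'' a b ->
  a < c < b -> g' c = 0 -> 0 < g'' c -> is_local_min g c.
Proof.
  intros H1 H2 Hc E Hpos.
  destruct (deriv_on_sign_change g' g'' a b c H2 Hc E Hpos) as [d [Hd [Hd1 [Hd2 [Hr Hl]]]]].
  exists d. split; [exact Hd|]. intros y Hy.
  destruct (Rtotal_order y c) as [Hlt|[->|Hgt]].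
  - rewrite Rabs_left in Hy by lra.
    apply Rlt_le, (deriv_on_neg_decreasing g g' a b y c H1); try lra.
    intros x Hx; apply Hl; lra.
  - lra.
  - rewrite Rabs_right in Hy by lra.
    apply Rlt_le, (deriv_on_pos_increasing g g' a b c y H1); try lra.
    intros x Hx; apply Hr; lra.
Qed.

Lemma deriv_on_zero g g' a b u v x : deriv_on g g' a b -> a <= u -> u < x < v -> v <= b ->
  (forall y, u < y < v -> g y = 0) -> g' x = 0.
Proof.
  intros H Hu Hx Hv H0.
  apply Rabs_eq_0. apply Rle_antisym; [|apply Rabs_pos].
  apply le_epsilon. intros eps He. rewrite Rplus_0_l.
  destruct (H x ltac:(lra) eps He) as [d [Hd Hd']].
  set (h := Rmin d (v - x) / 2).
  assert (0 < Rmin d (v - x)) by (apply Rmin_glb_lt; lra).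
  pose proof (Rmin_l d (v - x)). pose proof (Rmin_r d (v - x)).
  specialize (Hd' h ltac:(unfold h; lra) ltac:(rewrite Rabs_right; unfold h; lra)
                ltac:(unfold h; lra)).
  rewrite (H0 x), (H0 (x + h)) in Hd' by (unfold h; lra).
  replace ((0 - 0) / h - g' x) with (- g' x) in Hd' by (field; unfold h; lra).
  rewrite Rabs_Ropp in Hd'. lra.
Qed.

Section Cdf.

Variables (a b : R) (f : R -> R).
Hypothesis Hab : a < b.
Hypothesis f_cont : cont_on f a b.
Hypothesis f_ge0 : forall x, 0 <= f x.

Definition fclamp x := f (clamp a b x).

(* Equal to distr_fun on [a,b] (distr_fun_cdf); the clamped integrand is continuous. *)
Definition cdf x := RInt fclamp a x.

Lemma ex_RInt_fclamp u v : ex_RInt fclamp u v.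
Proof.
  apply (@ex_RInt_continuous R_CompleteNormedModule). intros z _.
  apply continuity_pt_filterlim, continuity_pt_clamp; [lra | exact f_cont].
Qed.

Lemma cdf_sub u v : cdf v - cdf u = RInt fclamp u v.
Proof.
  unfold cdf. rewrite <- (RInt_Chasles fclamp a u v) by apply ex_RInt_fclamp.
  change plus with Rplus. ring.
Qed.

Lemma RInt_fclamp_ge0 u v : u <= v -> 0 <= RInt fclamp u v.
Proof.
  intros Huv. apply RInt_ge_0; [exact Huv | apply ex_RInt_fclamp | intros; apply f_ge0].
Qed.

Lemma cdf_le u v : u <= v -> cdf u <= cdf v.
Proof. intros Huv. pose proof (RInt_fclamp_ge0 u v Huv). rewrite <- cdf_sub in H. lra. Qed.

Lemma cdf_lipschitz : exists M, 0 < M /\ forall u v, Rabs (cdf v - cdf u) <= M * Rabs (v - u).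
Proof.
  destruct (continuity_ab_maj fclamp a b ltac:(lra)) as [xM [HM _]].
  { intros c _. apply continuity_pt_clamp; [lra | exact f_cont]. }
  assert (Hbound : forall t, Rabs (fclamp t) <= fclamp xM + 1).
  { intros t. rewrite Rabs_right by (apply Rle_ge, f_ge0).
    specialize (HM (clamp a b t) (clamp_in a b t ltac:(lra))).
    unfold fclamp in *. rewrite clamp_id in HM by (apply clamp_in; lra). lra. }
  assert (Hfx : 0 <= fclamp xM) by apply f_ge0.
  exists (fclamp xM + 1). split; [lra|].
  assert (Hle : forall u v, u <= v -> Rabs (cdf v - cdf u) <= (fclamp xM + 1) * Rabs (v - u)).
  { intros u v Huv. rewrite cdf_sub, (Rabs_right (v - u)) by lra.
    pose proof (abs_RInt_le_const fclamp u v (fclamp xM + 1) Huv (ex_RInt_fclamp u v)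
                  (fun t _ => Hbound t)). lra. }
  intros u v. destruct (Rle_or_lt u v) as [Huv|Hvu]; [apply Hle; exact Huv|].
  rewrite <- Rabs_Ropp, <- (Rabs_Ropp (v - u)).
  replace (- (cdf v - cdf u)) with (cdf u - cdf v) by ring.
  replace (- (v - u)) with (u - v) by ring. apply Hle. lra.
Qed.

Lemma RInt_fclamp_pos u v y : u < y < v -> 0 < fclamp y -> 0 < RInt fclamp u v.
Proof.
  intros Hy Hpos.
  destruct (continuity_pt_elim _ y (continuity_pt_clamp f a b ltac:(lra) f_cont y)
              (fclamp y / 2) ltac:(lra)) as [d [Hd Hd']].
  set (p := Rmax u (y - d / 2)). set (q := Rmin v (y + d / 2)).
  assert (Hpq : u <= p < q /\ q <= v) by (unfold p, q; clamp_lra).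
  rewrite <- (RInt_Chasles fclamp u p v), <- (RInt_Chasles fclamp p q v)
    by apply ex_RInt_fclamp.
  change plus with Rplus.
  pose proof (RInt_fclamp_ge0 u p ltac:(lra)). pose proof (RInt_fclamp_ge0 q v ltac:(lra)).
  assert (Hmid : RInt (fun _ => fclamp y / 2) p q <= RInt fclamp p q).
  { apply RInt_le; [lra | apply ex_RInt_const | apply ex_RInt_fclamp|].
    intros x Hx. assert (Rabs (x - y) < d)
      by (unfold p, q in Hx; unfold Rabs; destruct Rcase_abs; clamp_lra).
    specialize (Hd' x H1). apply Rabs_def2 in Hd'. unfold fclamp in *. lra. }
  rewrite RInt_const in Hmid. change scal with Rmult in Hmid.
  assert (0 < (q - p) * (fclamp y / 2)) by (apply Rmult_lt_0_compat; lra).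
  lra.
Qed.

(* A density with nondegenerate critical points cannot vanish on an interval,
   since there it would have f' = f'' = 0. *)
Lemma cdf_lt f1 f2 u v : deriv_on f f1 a b -> deriv_on f1 f2 a b ->
  (forall x, a < x < b -> f1 x = 0 -> f2 x <> 0) ->
  a <= u -> u < v -> v <= b -> cdf u < cdf v.
Proof.
  intros Hd1 Hd2 Hnd Hu Huv Hv.
  enough (0 < cdf v - cdf u) by lra. rewrite cdf_sub.
  destruct (classic (exists y, u < y < v /\ 0 < f y)) as [[y [Hy Hfy]]|Hno].
  - apply (RInt_fclamp_pos u v y Hy). unfold fclamp. rewrite clamp_id by lra. exact Hfy.
  - exfalso.
    assert (Z0 : forall y, u < y < v -> f y = 0).
    { intros y Hy. destruct (Rle_lt_or_eq_dec 0 (f y) (f_ge0 y)) as [h|h]; [|auto].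
      exfalso; apply Hno; exists y; auto. }
    assert (Z1 : forall y, u < y < v -> f1 y = 0)
      by (intros y Hy; exact (deriv_on_zero f f1 a b u v y Hd1 Hu Hy Hv Z0)).
    apply (Hnd ((u + v) / 2)); [lra | apply Z1; lra|].
    exact (deriv_on_zero f1 f2 a b u v ((u + v) / 2) Hd2 Hu ltac:(lra) Hv Z1).
Qed.

End Cdf.

Lemma clusters_from_length lo mu : length (clusters_from lo mu) = S (length mu).
Proof. revert lo; induction mu; intros; simpl; auto. Qed.

Lemma minR_le l w : In w l -> minR l <= w.
Proof.
  unfold minR. generalize (hd 0 l). intros d. induction l; simpl; intros H; [contradiction|].
  destruct H as [->|H]; [apply Rmin_l|]. eapply Rle_trans; [apply Rmin_r | auto].
Qed.

Lemma minR_eq l v : In v l -> (forall w, In w l -> v <= w) -> minR l = v.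
Proof.
  intros Hin H. apply Rle_antisym; [apply minR_le; exact Hin|]. unfold minR.
  assert (Hd : v <= hd 0 l) by (destruct l; [contradiction | apply H; left; auto]).
  generalize dependent (hd 0 l). intros d Hd. clear Hin.
  induction l; simpl; [exact Hd|].
  apply Rmin_glb; [apply H; left; auto | apply IHl; intros; apply H; right; auto].
Qed.

Lemma in_inserts {A} (x : A) l L : In L (inserts x l) ->
  length L = S (length l) /\ forall y, In y L -> y = x \/ In y l.
Proof.
  revert L. induction l as [|c l IH]; intros L H; simpl in H.
  - destruct H as [<-|[]]. simpl. split; auto. intros y [->|[]]; auto.
  - destruct H as [<-|H].
    + simpl. split; auto. intros y [->|[->|Hy]]; auto.
    + apply in_map_iff in H. destruct H as [L' [<- HL']]. destruct (IH L' HL') as [Hl Hy].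
      simpl. split; [lia|]. intros y [->|Hin]; [right; left; auto|].
      destruct (Hy y Hin) as [h|h]; [left; auto | right; right; auto].
Qed.

Lemma in_perms {A} (l : list A) L : In L (perms l) ->
  length L = length l /\ forall y, In y L -> In y l.
Proof.
  revert L. induction l as [|c l IH]; intros L H; simpl in H.
  - destruct H as [<-|[]]. simpl; split; auto.
  - apply in_flat_map in H. destruct H as [L' [HL' HL]].
    destruct (IH L' HL') as [h1 h2]. destruct (in_inserts c L' L HL) as [h3 h4].
    simpl. split; [lia|]. intros y Hy. destruct (h4 y Hy) as [->|h]; [left; auto | right; auto].
Qed.

Lemma perms_refl {A} (l : list A) : In l (perms l).
Proof.
  induction l as [|c l IH]; simpl; [left; auto|].
  apply in_flat_map. exists l. split; auto. destruct l; simpl; auto.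
Qed.

Lemma sumR_ge0 {A} (G : A -> R) l : (forall p, In p l -> 0 <= G p) -> 0 <= sumR (map G l).
Proof.
  induction l; simpl; intros H; [lra|].
  assert (0 <= G a) by (apply H; left; auto). assert (0 <= sumR (map G l)) by auto. lra.
Qed.

Lemma sumR_ge_term {A} (G : A -> R) l p0 : (forall p, In p l -> 0 <= G p) -> In p0 l ->
  G p0 <= sumR (map G l).
Proof.
  induction l as [|c l IH]; simpl; intros H Hin; [contradiction|].
  assert (0 <= G c) by (apply H; left; auto).
  destruct Hin as [<-|Hin].
  - assert (0 <= sumR (map G l)) by (apply sumR_ge0; auto). lra.
  - specialize (IH (fun p h => H p (or_intror h)) Hin). lra.
Qed.

Lemma sumR_le {A} (G : A -> R) l t : (forall p, In p l -> G p <= t) ->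
  sumR (map G l) <= INR (length l) * t.
Proof.
  induction l as [|c l IH]; intros H; [simpl; lra|].
  change (sumR (map G (c :: l))) with (G c + sumR (map G l)).
  change (length (c :: l)) with (S (length l)). rewrite S_INR.
  assert (G c <= t) by (apply H; left; auto).
  assert (sumR (map G l) <= INR (length l) * t) by (apply IH; intros; apply H; right; auto).
  lra.
Qed.

Lemma Sorted_nth_lt (m : list R) i j : Sorted Rlt m -> (i < j)%nat -> (j < length m)%nat ->
  nth i m 0 < nth j m 0.
Proof.
  intros Hs. apply Sorted_StronglySorted in Hs; [|intros x y z; apply Rlt_trans].
  revert i j. induction Hs as [|c l Hs IH Hall]; intros i j Hij Hj; simpl in Hj; [lia|].
  destruct i as [|i]; destruct j as [|j]; try lia.
  - simpl. rewrite Forall_forall in Hall. apply Hall, nth_In. lia.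
  - simpl. apply IH; lia.
Qed.

Lemma Sorted_nth_le (m : list R) i j : Sorted Rlt m -> (i <= j)%nat -> (j < length m)%nat ->
  nth i m 0 <= nth j m 0.
Proof.
  intros Hs Hij Hj. destruct (Nat.eq_dec i j) as [->|Hne]; [lra|].
  apply Rlt_le, Sorted_nth_lt; auto; lia.
Qed.

Lemma Sorted_map_lt (g : R -> R) (l : list R) : Sorted Rlt l ->
  (forall x y, In x l -> In y l -> x < y -> g x < g y) -> Sorted Rlt (map g l).
Proof.
  induction l as [|c l IH]; intros Hs Hg; simpl; [constructor|].
  apply Sorted_inv in Hs. destruct Hs as [Hs Hd]. constructor.
  - apply IH; auto. intros; apply Hg; auto; right; auto.
  - destruct l as [|c' l]; simpl; constructor. inversion Hd.
    apply Hg; auto; [left | right; left]; auto.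
Qed.

Lemma nth_map_Some (l : list R) k : (k < length l)%nat ->
  nth k (map Some l) None = Some (nth k l 0).
Proof.
  intros H. rewrite <- (map_nth Some l 0 k). apply nth_indep. rewrite length_map; auto.
Qed.

Lemma nth_map_Some_overflow (l : list R) k : (length l <= k)%nat -> nth k (map Some l) None = None.
Proof. intros. apply nth_overflow. rewrite length_map; auto. Qed.

Lemma nth_app_last (m : list R) b : nth (length m) (m ++ [b]) 0 = b.
Proof. rewrite app_nth2, Nat.sub_diag by lia. reflexivity. Qed.

Lemma nth_cons_bounds a b (m : list R) k : a < b -> (forall x, In x m -> a < x < b) ->
  (k <= length m)%nat -> a <= nth k (a :: m) 0 < b.
Proof.
  intros Hab Hm Hk. destruct k; simpl; [lra|].
  assert (a < nth k m 0 < b) by (apply Hm, nth_In; lia). lra.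
Qed.

Lemma nth_app_bounds a b (m : list R) k : a < b -> (forall x, In x m -> a < x < b) ->
  (k <= length m)%nat -> a < nth k (m ++ [b]) 0 <= b.
Proof.
  intros Hab Hm Hk. destruct (Nat.eq_dec k (length m)) as [->|Hne]; [rewrite nth_app_last; lra|].
  rewrite app_nth1 by lia. assert (a < nth k m 0 < b) by (apply Hm, nth_In; lia). lra.
Qed.

Lemma perms_neq_nth {A} (l L : list A) d : In L (perms l) -> L <> l ->
  exists k j, (k < length l)%nat /\ (j < length l)%nat /\ j <> k /\ nth k L d = nth j l d.
Proof.
  intros HL Hne. destruct (in_perms l L HL) as [Hlen Hin].
  assert (Hk : exists k, (k < length l)%nat /\ nth k L d <> nth k l d).
  { apply NNPP. intros H. apply Hne. apply nth_ext with (d := d) (d' := d); [exact Hlen|].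
    intros k Hk. apply NNPP. intros H'. apply H. exists k. split; [lia | exact H']. }
  destruct Hk as [k [Hk Hkne]].
  assert (HkL : (k < length L)%nat) by lia.
  destruct (In_nth l (nth k L d) d (Hin _ (nth_In _ d HkL))) as [j [Hj Hjeq]].
  exists k, j. repeat split; try assumption; [intros ->; congruence | congruence].
Qed.

Definition indic (f : R -> R) (A : R -> Prop) x :=
  match excluded_middle_informative (A x) with left _ => f x | right _ => 0 end.

Lemma Rint_is_RInt g u v l : is_RInt g u v l -> Rint g u v = l.
Proof.
  intros H. unfold Rint. destruct excluded_middle_informative as [h|h].
  - rewrite <- RInt_Reals. apply is_RInt_unique; exact H.
  - exfalso. apply h. constructor. apply ex_RInt_Reals_0. exists l; exact H.
Qed.

Lemma Prob_is_RInt f a b A l : is_RInt (indic f A) a b l -> Prob f a b A = l.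
Proof. apply Rint_is_RInt. Qed.

Lemma Prob_ge0 f a b A : a <= b -> (forall x, 0 <= f x) -> 0 <= Prob f a b A.
Proof.
  intros Hab Hpos. change (0 <= Rint (indic f A) a b). unfold Rint.
  destruct excluded_middle_informative as [h|h]; [|lra].
  rewrite <- RInt_Reals. apply RInt_ge_0; [exact Hab | |].
  - apply ex_RInt_Reals_1. apply (epsilon h (fun _ => True)).
  - intros. unfold indic. destruct excluded_middle_informative; [apply Hpos | lra].
Qed.

Lemma is_RInt_zero g u v : u <= v -> (forall x, u < x < v -> g x = 0) -> is_RInt g u v 0.
Proof.
  intros Huv H. apply (is_RInt_ext (fun _ => 0)).
  { intros x Hx. rewrite Rmin_left, Rmax_right in Hx by lra. symmetry; apply H; exact Hx. }
  pose proof (is_RInt_const u v 0) as H0.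
  change (scal (v - u) 0) with ((v - u) * 0) in H0. rewrite Rmult_0_r in H0. exact H0.
Qed.

(* Intervals with optional (infinite when [None]) endpoints: the clusters. *)
Definition above (lo : option R) x := match lo with None => True | Some l => l < x end.
Definition below (hi : option R) x := match hi with None => True | Some h => x < h end.
Definition between lo hi x := above lo x /\ below hi x.

Definition omax (o1 o2 : option R) := match o1, o2 with
  | None, o => o | o, None => o | Some u, Some v => Some (Rmax u v) end.
Definition omin (o1 o2 : option R) := match o1, o2 with
  | None, o => o | o, None => o | Some u, Some v => Some (Rmin u v) end.

Lemma between_omax_omin lo1 hi1 lo2 hi2 x :
  between (omax lo1 lo2) (omin hi1 hi2) x <-> between lo1 hi1 x /\ between lo2 hi2 x.
Proof.
  unfold between, omax, omin. destruct lo1, lo2, hi1, hi2; simpl; unfold Rmax, Rmin;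
  repeat destruct Rle_dec; split; intros; intuition lra.
Qed.

Lemma nth_clusters_from lo mu k d : (k <= length mu)%nat -> forall x,
  nth k (clusters_from lo mu) d x <->
  between (nth k (lo :: map Some mu) None) (nth k (map Some mu) None) x.
Proof.
  revert lo k. induction mu as [|c mu IH]; intros lo k Hk x.
  - simpl in Hk. assert (k = 0%nat) by lia. subst. unfold between. destruct lo; simpl; tauto.
  - destruct k as [|k]; [unfold between; destruct lo; simpl; tauto|].
    simpl. simpl in Hk. apply IH. lia.
Qed.

Section Masses.

Variables (a b : R) (f : R -> R).
Hypothesis Hab : a < b.
Hypothesis f_cont : cont_on f a b.
Hypothesis f_ge0 : forall x, 0 <= f x.

(* The part of the interval (lo, hi) that lies in [a,b] is [lo_pt lo, hi_pt hi]. *)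
Definition lo_pt (lo : option R) := match lo with None => a | Some u => clamp a b u end.
Definition hi_pt (hi : option R) := match hi with None => b | Some u => clamp a b u end.
Definition mass lo hi := cdf a b f (Rmax (lo_pt lo) (hi_pt hi)) - cdf a b f (lo_pt lo).

Lemma lo_pt_omax lo1 lo2 : lo_pt (omax lo1 lo2) = Rmax (lo_pt lo1) (lo_pt lo2).
Proof. destruct lo1, lo2; simpl; clamp_lra. Qed.

Lemma hi_pt_omin hi1 hi2 : hi_pt (omin hi1 hi2) = Rmin (hi_pt hi1) (hi_pt hi2).
Proof. destruct hi1, hi2; simpl; clamp_lra. Qed.

Lemma is_RInt_indic_fclamp u v : a <= u <= v -> v <= b -> forall A : R -> Prop,
  (forall x, u < x < v -> A x) -> is_RInt (indic f A) u v (cdf a b f v - cdf a b f u).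
Proof.
  intros Hu Hv A HA. rewrite cdf_sub by assumption.
  apply (is_RInt_ext (fclamp a b f)).
  - intros x Hx. rewrite Rmin_left, Rmax_right in Hx by lra. unfold indic, fclamp.
    destruct excluded_middle_informative as [_|h]; [rewrite clamp_id by lra; reflexivity|].
    exfalso. apply h, HA, Hx.
  - apply (@RInt_correct R_CompleteNormedModule). apply ex_RInt_fclamp; [lra | exact f_cont].
Qed.

Lemma is_RInt_indic_between lo hi : is_RInt (indic f (between lo hi)) a b (mass lo hi).
Proof.
  unfold mass.
  set (L := lo_pt lo). set (H := hi_pt hi). set (H' := Rmax L H).
  assert (HL : a <= L <= b) by (unfold L; destruct lo; simpl; [apply clamp_in|]; lra).
  assert (HH : a <= H <= b) by (unfold H; destruct hi; simpl; [apply clamp_in|]; lra).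
  assert (HH' : L <= H' <= b) by (unfold H'; clamp_lra).
  set (X := cdf a b f H' - cdf a b f L).
  replace X with (plus (plus 0 X) 0) by (change (plus (plus 0 X) 0) with (0 + X + 0); lra).
  apply (@is_RInt_Chasles R_NormedModule _ a H' b);
    [apply (@is_RInt_Chasles R_NormedModule _ a L H')|].
  - apply is_RInt_zero; [lra|]. intros x Hx. unfold indic.
    destruct excluded_middle_informative as [[h1 h2]|h]; [exfalso|reflexivity].
    unfold L in *. destruct lo; simpl in *; clamp_lra.
  - apply is_RInt_indic_fclamp; [lra | lra |]. intros x Hx.
    unfold H', L, H in *. split; [destruct lo | destruct hi]; simpl in *; clamp_lra.
  - apply is_RInt_zero; [lra|]. intros x Hx. unfold indic.
    destruct excluded_middle_informative as [[h1 h2]|h]; [exfalso|reflexivity].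
    unfold H', L, H in *. destruct hi; simpl in *; clamp_lra.
Qed.

Lemma is_RInt_indic_symdiff A B lo1 hi1 lo2 hi2 :
  (forall x, A x <-> between lo1 hi1 x) -> (forall x, B x <-> between lo2 hi2 x) ->
  is_RInt (indic f (symdiff A B)) a b
    (mass lo1 hi1 + mass lo2 hi2 - 2 * mass (omax lo1 lo2) (omin hi1 hi2)).
Proof.
  intros HA HB.
  pose proof (is_RInt_plus _ _ _ _ _ _
    (is_RInt_plus _ _ _ _ _ _ (is_RInt_indic_between lo1 hi1) (is_RInt_indic_between lo2 hi2))
    (is_RInt_scal _ _ _ (-2) _ (is_RInt_indic_between (omax lo1 lo2) (omin hi1 hi2)))) as H.
  change plus with Rplus in H. change scal with Rmult in H.
  replace (mass lo1 hi1 + mass lo2 hi2 - 2 * mass (omax lo1 lo2) (omin hi1 hi2)) with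
    (mass lo1 hi1 + mass lo2 hi2 + -2 * mass (omax lo1 lo2) (omin hi1 hi2)) by ring.
  refine (is_RInt_ext _ _ a b _ _ H).
  intros x _. pose proof (between_omax_omin lo1 hi1 lo2 hi2 x).
  pose proof (HA x). pose proof (HB x).
  unfold indic, symdiff. match goal with |- ?l = ?r => change (@eq R l r) end.
  repeat destruct excluded_middle_informative; try ring; exfalso; tauto.
Qed.

Lemma symdiff_mass_overlap lo1 hi1 lo2 hi2 :
  Rmax (lo_pt lo1) (lo_pt lo2) <= Rmin (hi_pt hi1) (hi_pt hi2) ->
  mass lo1 hi1 + mass lo2 hi2 - 2 * mass (omax lo1 lo2) (omin hi1 hi2) =
  Rabs (cdf a b f (lo_pt lo1) - cdf a b f (lo_pt lo2)) +
  Rabs (cdf a b f (hi_pt hi1) - cdf a b f (hi_pt hi2)).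
Proof.
  intros Hle. unfold mass. rewrite lo_pt_omax, hi_pt_omin.
  set (L1 := lo_pt lo1) in *. set (L2 := lo_pt lo2) in *.
  set (H1 := hi_pt hi1) in *. set (H2 := hi_pt hi2) in *.
  pose proof (Rmax_l L1 L2). pose proof (Rmax_r L1 L2).
  pose proof (Rmin_l H1 H2). pose proof (Rmin_r H1 H2).
  rewrite (Rmax_right L1 H1), (Rmax_right L2 H2), (Rmax_right (Rmax L1 L2)) by lra.
  assert (Habs : forall u v, Rabs (cdf a b f u - cdf a b f v) =
            cdf a b f (Rmax u v) - cdf a b f (Rmin u v)).
  { intros u v. unfold Rmax, Rmin. destruct Rle_dec.
    - pose proof (cdf_le a b f Hab f_cont f_ge0 u v r). rewrite Rabs_left1 by lra; lra.
    - pose proof (cdf_le a b f Hab f_cont f_ge0 v u ltac:(lra)). rewrite Rabs_right by lra; lra. }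
  rewrite !Habs. unfold Rmax, Rmin. repeat destruct Rle_dec; lra.
Qed.

Lemma cdf_sub_le_of_subset A l p q : a <= p <= q -> q <= b ->
  is_RInt (indic f A) a b l -> (forall x, p < x < q -> A x) ->
  cdf a b f q - cdf a b f p <= l.
Proof.
  intros Hp Hq HA Hsub.
  pose proof (is_RInt_indic_between (Some p) (Some q)) as Hpq.
  unfold mass in Hpq. simpl in Hpq. rewrite !clamp_id, Rmax_right in Hpq by lra.
  rewrite <- (is_RInt_unique _ _ _ _ HA), <- (is_RInt_unique _ _ _ _ Hpq).
  apply RInt_le; [lra | eexists; exact Hpq | eexists; exact HA |].
  intros x Hx. unfold indic.
  destruct excluded_middle_informative as [[h1 h2]|h], excluded_middle_informative as [h'|h'];
    simpl in *; try lra; [exfalso; apply h', Hsub; lra | apply f_ge0].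
Qed.

Lemma distr_fun_cdf x : a <= x <= b -> distr_fun f a b x = cdf a b f x.
Proof.
  intros Hx. apply Prob_is_RInt.
  replace (cdf a b f x) with (cdf a b f x - cdf a b f a + 0)
    by (unfold cdf at 2; rewrite RInt_point; change zero with 0; lra).
  apply (@is_RInt_Chasles R_NormedModule _ a x b).
  - apply is_RInt_indic_fclamp; [lra | lra |]. intros y Hy. lra.
  - apply is_RInt_zero; [lra|]. intros y Hy. unfold indic.
    destruct excluded_middle_informative; [lra | reflexivity].
Qed.


Lemma Prob_symdiff_overlap A B lo1 hi1 lo2 hi2 :
  (forall x, A x <-> between lo1 hi1 x) -> (forall x, B x <-> between lo2 hi2 x) ->
  Rmax (lo_pt lo1) (lo_pt lo2) <= Rmin (hi_pt hi1) (hi_pt hi2) ->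
  Prob f a b (symdiff A B) =
  Rabs (cdf a b f (lo_pt lo1) - cdf a b f (lo_pt lo2)) +
  Rabs (cdf a b f (hi_pt hi1) - cdf a b f (hi_pt hi2)).
Proof.
  intros HA HB Hle. rewrite <- symdiff_mass_overlap by exact Hle.
  apply Prob_is_RInt, is_RInt_indic_symdiff; assumption.
Qed.

Definition cost (p : (R -> Prop) * (R -> Prop)) := Prob f a b (symdiff (fst p) (snd p)).

(* Every cut point is counted twice, once for each of the two clusters it bounds. *)
Lemma sum_cost_clusters mh m lo1 lo2 : length mh = length m ->
  (forall x, In x mh -> a <= x <= b) -> (forall x, In x m -> a <= x <= b) ->
  (forall k, (k <= length m)%nat ->
     Rmax (lo_pt (nth k (lo1 :: map Some mh) None)) (lo_pt (nth k (lo2 :: map Some m) None)) <=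
     Rmin (hi_pt (nth k (map Some mh) None)) (hi_pt (nth k (map Some m) None))) ->
  sumR (map cost (combine (clusters_from lo1 mh) (clusters_from lo2 m))) =
  Rabs (cdf a b f (lo_pt lo1) - cdf a b f (lo_pt lo2)) +
  2 * sumR (map (fun p => Rabs (cdf a b f (fst p) - cdf a b f (snd p))) (combine mh m)).
Proof.
  revert m lo1 lo2. induction mh as [|h mh IH]; intros m lo1 lo2 Hlen Hmh Hm Hover.
  - destruct m; [|discriminate]. simpl. unfold cost. simpl.
    rewrite (Prob_symdiff_overlap _ _ lo1 None lo2 None);
      [| intros x; unfold between, above, below; destruct lo1; tauto
       | intros x; unfold between, above, below; destruct lo2; tauto
       | exact (Hover 0%nat (le_n 0))].
    simpl. rewrite Rminus_diag, Rabs_R0. ring.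
  - destruct m as [|c m]; [discriminate|]. simpl in Hlen.
    assert (Hh : a <= h <= b) by (apply Hmh; left; auto).
    assert (Hc : a <= c <= b) by (apply Hm; left; auto).
    simpl combine. simpl map. simpl sumR.
    rewrite IH; [| lia | intros; apply Hmh; right; auto | intros; apply Hm; right; auto
                 | intros k Hk; apply (Hover (S k)); simpl; lia].
    unfold cost at 1. simpl fst. simpl snd.
    rewrite (Prob_symdiff_overlap _ _ lo1 (Some h) lo2 (Some c));
      [| intros x; unfold between, above, below; destruct lo1; tauto
       | intros x; unfold between, above, below; destruct lo2; tauto
       | apply (Hover 0%nat); simpl; lia].
    simpl. rewrite !clamp_id by lra. ring.
Qed.

Lemma cut_lo_near m mu eta k : 0 < eta -> length mu = length m ->
  (forall i, (i < length m)%nat -> Rabs (nth i mu 0 - nth i m 0) < eta) ->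
  (forall x, In x mu -> a < x < b) -> (k <= length m)%nat ->
  (forall x, nth k (a :: m) 0 + eta < x -> above (nth k (None :: map Some mu) None) x) /\
  lo_pt (nth k (None :: map Some mu) None) <= nth k (a :: m) 0 + eta.
Proof.
  intros He Hl Hcl Hin Hk. destruct k as [|k].
  - simpl. split; [auto | lra].
  - simpl nth. rewrite nth_map_Some by lia.
    specialize (Hcl k ltac:(lia)). apply Rabs_def2 in Hcl.
    assert (a < nth k mu 0 < b) by (apply Hin, nth_In; lia).
    simpl. rewrite clamp_id by lra. split; intros; lra.
Qed.

Lemma cut_hi_near m mu eta k : 0 < eta -> length mu = length m ->
  (forall i, (i < length m)%nat -> Rabs (nth i mu 0 - nth i m 0) < eta) ->
  (forall x, In x mu -> a < x < b) -> (k <= length m)%nat ->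
  (forall x, x < nth k (m ++ [b]) 0 - eta -> below (nth k (map Some mu) None) x) /\
  nth k (m ++ [b]) 0 - eta <= hi_pt (nth k (map Some mu) None).
Proof.
  intros He Hl Hcl Hin Hk. destruct (Nat.eq_dec k (length m)) as [->|Hne].
  - rewrite nth_app_last, nth_map_Some_overflow by lia. simpl. split; [auto | lra].
  - rewrite app_nth1, nth_map_Some by lia.
    specialize (Hcl k ltac:(lia)). apply Rabs_def2 in Hcl.
    assert (a < nth k mu 0 < b) by (apply Hin, nth_In; lia).
    simpl. rewrite clamp_id by lra. split; intros; lra.
Qed.

Section Aligned.

Variables (m mh : list R) (eta delta : R).
Hypothesis m_sorted : Sorted Rlt m.
Hypothesis mh_length : length mh = length m.
Hypothesis m_in : forall x, In x m -> a < x < b.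
Hypothesis mh_in : forall x, In x mh -> a < x < b.
Hypothesis eta_pos : 0 < eta.
Hypothesis m_gaps : forall k, (k <= length m)%nat ->
  nth k (a :: m) 0 + 4 * eta <= nth k (m ++ [b]) 0.
Hypothesis mh_close : forall i, (i < length m)%nat -> Rabs (nth i mh 0 - nth i m 0) < eta.
Hypothesis core_mass : forall k, (k <= length m)%nat ->
  delta <= cdf a b f (nth k (m ++ [b]) 0 - eta) - cdf a b f (nth k (a :: m) 0 + eta).

Lemma m_close i : (i < length m)%nat -> Rabs (nth i m 0 - nth i m 0) < eta.
Proof. intros. rewrite Rminus_diag, Rabs_R0. exact eta_pos. Qed.

Definition shift_cost :=
  sumR (map (fun p => Rabs (cdf a b f (fst p) - cdf a b f (snd p))) (combine mh m)).

Lemma cost_identity :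
  sumR (map cost (combine (modal_clustering mh) (modal_clustering m))) = 2 * shift_cost.
Proof.
  unfold modal_clustering, shift_cost. rewrite sum_cost_clusters; try assumption.
  - simpl. rewrite Rminus_diag, Rabs_R0. ring.
  - intros x Hx. specialize (mh_in x Hx). lra.
  - intros x Hx. specialize (m_in x Hx). lra.
  - intros k Hk. specialize (m_gaps k Hk).
    pose proof (proj2 (cut_lo_near m mh eta k eta_pos mh_length mh_close mh_in Hk)).
    pose proof (proj2 (cut_lo_near m m eta k eta_pos eq_refl m_close m_in Hk)).
    pose proof (proj2 (cut_hi_near m mh eta k eta_pos mh_length mh_close mh_in Hk)).
    pose proof (proj2 (cut_hi_near m m eta k eta_pos eq_refl m_close m_in Hk)).
    apply Rmax_lub; apply Rmin_glb; lra.
Qed.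

(* The core (m_(k-1) + eta, m_k - eta) of the k-th cluster of [mh] misses every
   other cluster of [m]. *)
Lemma cost_misaligned k j d : (k <= length m)%nat -> (j <= length m)%nat -> j <> k ->
  delta <= cost (nth k (modal_clustering mh) d, nth j (modal_clustering m) d).
Proof.
  intros Hk Hj Hjk. unfold cost, modal_clustering. simpl fst. simpl snd.
  pose proof (nth_clusters_from None mh k d ltac:(lia)) as HC.
  pose proof (nth_clusters_from None m j d Hj) as HD.
  pose proof (is_RInt_indic_symdiff _ _ _ _ _ _ HC HD) as Hint.
  rewrite (Prob_is_RInt _ _ _ _ _ Hint).
  eapply Rle_trans; [apply (core_mass k Hk)|].
  pose proof (m_gaps k Hk).
  pose proof (nth_cons_bounds a b m k Hab m_in Hk).
  pose proof (nth_app_bounds a b m k Hab m_in Hk).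
  apply (cdf_sub_le_of_subset _ _ (nth k (a :: m) 0 + eta) (nth k (m ++ [b]) 0 - eta)
           ltac:(lra) ltac:(lra) Hint).
  intros x Hx. left. split.
  - apply HC. split.
    + apply (proj1 (cut_lo_near m mh eta k eta_pos mh_length mh_close mh_in Hk)). lra.
    + apply (proj1 (cut_hi_near m mh eta k eta_pos mh_length mh_close mh_in Hk)). lra.
  - intros HxD. apply HD in HxD. destruct HxD as [Hlo Hhi].
    destruct (Nat.lt_ge_cases k j) as [Hkj|Hkj].
    + destruct j as [|j]; [lia|]. simpl in Hlo. rewrite nth_map_Some in Hlo by lia.
      simpl in Hlo. rewrite app_nth1 in Hx by lia.
      assert (nth k m 0 <= nth j m 0) by (apply Sorted_nth_le; auto; lia). lra.
    + destruct k as [|k]; [lia|]. simpl nth in Hx.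
      rewrite nth_map_Some in Hhi by lia. simpl in Hhi.
      assert (nth j m 0 <= nth k m 0) by (apply Sorted_nth_le; auto; lia). lra.
Qed.

Lemma shift_cost_distr_fun :
  sumR (map (fun p => Rabs (distr_fun f a b (fst p) - distr_fun f a b (snd p))) (combine mh m)) =
  shift_cost.
Proof.
  unfold shift_cost. f_equal. apply map_ext_in. intros [u v] Huv. simpl.
  pose proof (mh_in u (in_combine_l _ _ _ _ Huv)). pose proof (m_in v (in_combine_r _ _ _ _ Huv)).
  rewrite !distr_fun_cdf by lra. reflexivity.
Qed.

Lemma dP_aligned : 2 * shift_cost < delta ->
  dP f a b (modal_clustering mh) (modal_clustering m) =
  sumR (map (fun p => Rabs (distr_fun f a b (fst p) - distr_fun f a b (snd p))) (combine mh m)).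
Proof.
  intros Hsmall. rewrite shift_cost_distr_fun.
  set (C := modal_clustering mh). set (D := modal_clustering m).
  assert (HlC : length C = S (length m))
    by (unfold C, modal_clustering; rewrite clusters_from_length; lia).
  assert (HlD : length D = S (length m))
    by (unfold D, modal_clustering; rewrite clusters_from_length; lia).
  unfold dP. fold C D. rewrite HlC, HlD, Nat.max_id.
  unfold pad. rewrite HlC, HlD, Nat.sub_diag. simpl repeat. rewrite !app_nil_r.
  change (fun p => Prob f a b (symdiff (fst p) (snd p))) with cost.
  assert (Hid := cost_identity). fold C D in Hid.
  rewrite (minR_eq _ (2 * shift_cost));
    [lra | apply in_map_iff; exists D; split; [exact Hid | apply perms_refl]|].
  intros w Hw. apply in_map_iff in Hw. destruct Hw as [L [<- HL]]. cbv beta.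
  destruct (classic (L = D)) as [->|Hne]; [lra|].
  set (d := fun _ : R => False).
  destruct (perms_neq_nth D L d HL Hne) as [k [j [Hk [Hj [Hjk Hkj]]]]].
  destruct (in_perms D L HL) as [HlenL _].
  assert (Hle : cost (nth k C d, nth k L d) <= sumR (map cost (combine C L))).
  { apply sumR_ge_term.
    - intros p _. apply Prob_ge0; [lra | exact f_ge0].
    - rewrite <- combine_nth by congruence. apply nth_In. rewrite length_combine. lia. }
  rewrite Hkj in Hle.
  rewrite HlD in Hk, Hj.
  pose proof (cost_misaligned k j d ltac:(lia) ltac:(lia) Hjk) as Hmis. fold C D in Hmis. lra.
Qed.

End Aligned.

End Masses.

Lemma finite_min_radius (l : list R) (P : R -> R -> Prop) :
  (forall x r r', In x l -> 0 < r' <= r -> P x r -> P x r') ->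
  (forall x, In x l -> exists r, 0 < r /\ P x r) ->
  exists r, 0 < r /\ forall x, In x l -> P x r.
Proof.
  induction l as [|c l IH]; intros Hmon Hex; [exists 1; split; [lra | intros x []]|].
  destruct (Hex c (or_introl eq_refl)) as [r1 [Hr1 HP1]].
  destruct IH as [r2 [Hr2 HP2]].
  - intros x r r' Hx; apply Hmon; right; auto.
  - intros x Hx; apply Hex; right; auto.
  - assert (0 < Rmin r1 r2) by (apply Rmin_glb_lt; auto).
    pose proof (Rmin_l r1 r2). pose proof (Rmin_r r1 r2).
    exists (Rmin r1 r2). split; [assumption|]. intros x [<-|Hx].
    + apply (Hmon c r1); [left; auto | lra | auto].
    + apply (Hmon x r2); [right; auto | lra | auto].
Qed.

Lemma nat_min_pos (q : nat -> R) n : (forall k, (k <= n)%nat -> 0 < q k) ->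
  exists d, 0 < d /\ forall k, (k <= n)%nat -> d <= q k.
Proof.
  induction n as [|n IH]; intros H.
  - exists (q 0%nat). split; [apply H; lia|]. intros k Hk. replace k with 0%nat by lia. lra.
  - destruct IH as [d [Hd Hd']]; [intros; apply H; lia|].
    exists (Rmin d (q (S n))). split; [apply Rmin_glb_lt; auto; apply H; lia|].
    intros k Hk. destruct (Nat.eq_dec k (S n)) as [->|Hne]; [apply Rmin_r|].
    eapply Rle_trans; [apply Rmin_l | apply Hd'; lia].
Qed.

Lemma continuity_pt_sumR (h : R -> R -> R) (l : list R) x :
  (forall c, continuity_pt (h c) x) -> continuity_pt (fun y => sumR (map (fun c => h c y) l)) x.
Proof.
  intros Hc. induction l as [|c l IH]; simpl; [apply continuity_pt_const; intros ? ?; reflexivity|].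
  apply (continuity_pt_plus (h c)); [apply Hc | exact IH].
Qed.

Lemma unique_critical_local_min a b g g1 g2 c r : deriv_on g g1 a b -> deriv_on g1 g2 a b ->
  0 < r -> a < c - r -> c + r < b -> g1 (c - r) < 0 -> 0 < g1 (c + r) ->
  (forall x, c - r <= x <= c + r -> 0 < g2 x) ->
  exists z, c - r < z < c + r /\ g1 z = 0 /\ is_local_min g z /\
    forall y, c - r < y < c + r -> g1 y = 0 -> y = z.
Proof.
  intros H1 H2 Hr Ha Hb Hl Hu Hpos.
  assert (Hcont : continuity (fun y => g1 (clamp a b y))).
  { intros x. apply continuity_pt_clamp; [lra | exact (deriv_on_cont_on g1 g2 a b H2)]. }
  destruct (IVT _ (c - r) (c + r) Hcont ltac:(lra)) as [z [Hz Hz0]];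
    [rewrite clamp_id by lra; exact Hl | rewrite clamp_id by lra; exact Hu|].
  rewrite clamp_id in Hz0 by lra.
  assert (Hz' : c - r < z < c + r).
  { split; apply Rnot_le_lt; intros Hle;
      [replace z with (c - r) in Hz0 by lra | replace z with (c + r) in Hz0 by lra]; lra. }
  assert (Hinc : forall u v, c - r <= u -> u < v -> v <= c + r -> g1 u < g1 v)
    by (intros u v Hu' Huv Hv; apply (deriv_on_pos_increasing g1 g2 a b u v H2); try lra;
        intros x Hx; apply Hpos; lra).
  exists z. split; [exact Hz'|]. split; [exact Hz0|]. split.
  - apply (deriv2_pos_local_min g g1 g2 a b z H1 H2); [lra | exact Hz0 | apply Hpos; lra].
  - intros y Hy Hy0. destruct (Rtotal_order y z) as [h|[h|h]]; [| exact h |];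
      [pose proof (Hinc y z) | pose proof (Hinc z y)]; lra.
Qed.

Section Selection.

Variables (a b : R) (g g1 g2 : R -> R) (m : list R) (rho : R).
Hypothesis g_d1 : deriv_on g g1 a b.
Hypothesis g_d2 : deriv_on g1 g2 a b.
Hypothesis m_sorted : Sorted Rlt m.
Hypothesis rho_pos : 0 < rho.
Hypothesis m_separated : forall c, In c m ->
  a < c - rho /\ c + rho < b /\ forall c', In c' m -> c < c' -> c + 2 * rho <= c'.
Hypothesis g1_sign_change : forall c, In c m -> g1 (c - rho) < 0 < g1 (c + rho).
Hypothesis g2_pos : forall c, In c m -> forall x, c - rho <= x <= c + rho -> 0 < g2 x.
Hypothesis local_min_near_m : forall x, a < x < b -> is_local_min g x ->
  exists c, In c m /\ Rabs (x - c) < rho.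

(* The critical point of g near c (any point if there is none). *)
Definition near_critical c := epsilon (inhabits 0) (fun z => c - rho < z < c + rho /\ g1 z = 0).

Lemma near_critical_spec c : In c m ->
  c - rho < near_critical c < c + rho /\ is_local_min g (near_critical c) /\
  forall y, c - rho < y < c + rho -> g1 y = 0 -> y = near_critical c.
Proof.
  intros Hc. destruct (m_separated c Hc) as [Ha [Hb _]]. destruct (g1_sign_change c Hc).
  destruct (unique_critical_local_min a b g g1 g2 c rho g_d1 g_d2) as [z [Hz [Hz0 [Hzmin Hzu]]]];
    auto; [apply g2_pos, Hc|].
  assert (Hs := epsilon_spec (inhabits 0) (fun z => c - rho < z < c + rho /\ g1 z = 0)
                  (ex_intro _ z (conj Hz Hz0))).
  fold (near_critical c) in Hs. replace (near_critical c) with z by (symmetry; apply Hzu; apply Hs).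
  auto.
Qed.

Lemma local_minimizers_near :
  exists mh, Sorted Rlt mh /\ length mh = length m /\
    (forall x, In x mh <-> a < x < b /\ is_local_min g x) /\
    forall i, (i < length m)%nat -> Rabs (nth i mh 0 - nth i m 0) < rho.
Proof.
  exists (map near_critical m). split; [|split; [apply length_map | split]].
  - apply Sorted_map_lt; [exact m_sorted|]. intros x y Hx Hy Hxy.
    pose proof (proj1 (near_critical_spec x Hx)). pose proof (proj1 (near_critical_spec y Hy)).
    destruct (m_separated x Hx) as [_ [_ Hsep]]. specialize (Hsep y Hy Hxy). lra.
  - intros x. split.
    + intros Hx. apply in_map_iff in Hx. destruct Hx as [c [<- Hc]].
      destruct (near_critical_spec c Hc) as [? [? _]]. destruct (m_separated c Hc).
      split; [lra | assumption].
    + intros [Hx Hmin]. destruct (local_min_near_m x Hx Hmin) as [c [Hc Hxc]].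
      apply in_map_iff. exists c. split; [|exact Hc]. symmetry.
      apply (near_critical_spec c Hc); [apply Rabs_def2 in Hxc; lra|].
      exact (local_min_deriv_eq0 g g1 a b x g_d1 Hx Hmin).
  - intros i Hi. assert (Hin : In (nth i m 0) m) by (apply nth_In; lia).
    rewrite (nth_indep _ 0 (near_critical 0)) by (rewrite length_map; lia).
    rewrite map_nth. destruct (near_critical_spec _ Hin) as [Hz _]. apply Rabs_def1; lra.
Qed.

End Selection.

Lemma in_combine_nth (l1 l2 : list R) u v : length l1 = length l2 ->
  In (u, v) (combine l1 l2) -> exists i, (i < length l2)%nat /\ u = nth i l1 0 /\ v = nth i l2 0.
Proof.
  intros Hlen Hin. destruct (In_nth _ _ (0, 0) Hin) as [i [Hi Hnth]].
  rewrite length_combine in Hi. rewrite combine_nth in Hnth by exact Hlen.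
  injection Hnth as <- <-. exists i. split; [lia | auto].
Qed.

Section Density.

Variables (a b : R) (f f1 f2 : R -> R) (m : list R).
Hypothesis Hab : a < b.
Hypothesis f_ge0 : forall x, 0 <= f x.
Hypothesis f_d1 : deriv_on f f1 a b.
Hypothesis f_d2 : deriv_on f1 f2 a b.
Hypothesis f2_cont : cont_on f2 a b.
Hypothesis f1_a : f1 a <> 0.
Hypothesis f1_b : f1 b <> 0.
Hypothesis f_nondegenerate : forall x, a < x < b -> f1 x = 0 -> f2 x <> 0.
Hypothesis m_sorted : Sorted Rlt m.
Hypothesis m_spec : forall x, In x m <-> a < x < b /\ is_local_min f x.

Lemma In_m_iff c : In c m <-> a < c < b /\ f1 c = 0 /\ 0 < f2 c.
Proof.
  rewrite m_spec. split.
  - intros [Hc Hmin]. pose proof (local_min_deriv_eq0 f f1 a b c f_d1 Hc Hmin) as E.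
    pose proof (local_min_deriv2_ge0 f f1 f2 a b c f_d1 f_d2 Hc Hmin).
    pose proof (f_nondegenerate c Hc E). repeat split; try lra; exact E.
  - intros [Hc [E P]].
    split; [exact Hc | exact (deriv2_pos_local_min f f1 f2 a b c f_d1 f_d2 Hc E P)].
Qed.

Lemma m_in x : In x m -> a < x < b.
Proof. intros Hx. apply In_m_iff, Hx. Qed.

Lemma m_gaps : exists r, 0 < r /\
  forall k, (k <= length m)%nat -> nth k (a :: m) 0 + 4 * r <= nth k (m ++ [b]) 0.
Proof.
  destruct (nat_min_pos (fun k => (nth k (m ++ [b]) 0 - nth k (a :: m) 0) / 4) (length m))
    as [r [Hr Hle]].
  - intros k Hk. cbv beta. enough (nth k (a :: m) 0 < nth k (m ++ [b]) 0) by lra.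
    destruct k as [|k]; [pose proof (nth_app_bounds a b m 0 Hab m_in Hk); simpl; lra|].
    simpl nth at 1. assert (Hkm : In (nth k m 0) m) by (apply nth_In; lia).
    destruct (Nat.eq_dec (S k) (length m)) as [E|Hne].
    + rewrite E, nth_app_last. apply m_in, Hkm.
    + rewrite app_nth1 by lia. apply Sorted_nth_lt; auto; lia.
  - exists r. split; [exact Hr|]. intros k Hk. specialize (Hle k Hk). cbv beta in Hle. lra.
Qed.

(* Once every m̂_j is within eta of m_j, the identity matching is optimal. *)
Lemma dP_modal_near : exists eta, 0 < eta /\ forall mh, length mh = length m ->
  (forall x, In x mh -> a < x < b) ->
  (forall i, (i < length m)%nat -> Rabs (nth i mh 0 - nth i m 0) < eta) ->
  dP f a b (modal_clustering mh) (modal_clustering m) =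
  sumR (map (fun p => Rabs (distr_fun f a b (fst p) - distr_fun f a b (snd p))) (combine mh m)).
Proof.
  assert (f_cont : cont_on f a b) by exact (deriv_on_cont_on f f1 a b f_d1).
  destruct m_gaps as [r [Hr Hgap]].
  set (lo k := nth k (a :: m) 0). set (hi k := nth k (m ++ [b]) 0).
  destruct (nat_min_pos (fun k => cdf a b f (hi k - r) - cdf a b f (lo k + r)) (length m))
    as [delta [Hdelta Hcore]].
  { intros k Hk. pose proof (nth_cons_bounds a b m k Hab m_in Hk).
    pose proof (nth_app_bounds a b m k Hab m_in Hk). specialize (Hgap k Hk).
    pose proof (cdf_lt a b f Hab f_cont f_ge0 f1 f2 (lo k + r) (hi k - r) f_d1 f_d2
                  f_nondegenerate ltac:(unfold lo; lra) ltac:(unfold lo, hi; lra)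
                  ltac:(unfold hi; lra)).
    lra. }
  destruct (cdf_lipschitz a b f Hab f_cont f_ge0) as [M [HM Hlip]].
  set (n := INR (length m)). assert (Hn : 0 <= n) by apply pos_INR.
  set (eta := Rmin r (delta / (4 * (n + 1) * M))).
  assert (Heta : 0 < eta) by (apply Rmin_glb_lt; [lra | apply Rdiv_lt_0_compat; nra]).
  assert (Hetar : eta <= r) by apply Rmin_l.
  assert (HetaM : 4 * (n + 1) * M * eta <= delta).
  { assert (eta <= delta / (4 * (n + 1) * M)) by apply Rmin_r.
    apply (Rmult_le_compat_l (4 * (n + 1) * M)) in H; [|nra].
    replace (4 * (n + 1) * M * (delta / (4 * (n + 1) * M))) with delta in H by (field; nra).
    exact H. }
  exists eta. split; [exact Heta|]. intros mh Hlen Hin Hclose.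
  apply (dP_aligned a b f Hab f_cont f_ge0 m mh eta delta); auto.
  - exact m_in.
  - intros k Hk. specialize (Hgap k Hk). lra.
  - intros k Hk. specialize (Hcore k Hk). unfold lo, hi in Hcore.
    pose proof (cdf_le a b f Hab f_cont f_ge0 (nth k (a :: m) 0 + eta) (nth k (a :: m) 0 + r)
                  ltac:(lra)).
    pose proof (cdf_le a b f Hab f_cont f_ge0 (nth k (m ++ [b]) 0 - r) (nth k (m ++ [b]) 0 - eta)
                  ltac:(lra)).
    lra.
  - assert (Hshift : shift_cost a b f m mh <= INR (length (combine mh m)) * (M * eta)).
    { apply sumR_le. intros [u v] Huv.
      destruct (in_combine_nth mh m u v Hlen Huv) as [i [Hi [-> ->]]].
      simpl. eapply Rle_trans; [apply Hlip|]. apply Rmult_le_compat_l; [lra|].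
      apply Rlt_le, Hclose, Hi. }
    rewrite length_combine, Hlen, Nat.min_id in Hshift. fold n in Hshift.
    assert (0 < M * eta) by nra. nra.
Qed.


Definition isolated_at r c :=
  a < c - r /\ c + r < b /\ (forall c', In c' m -> c < c' -> c + 2 * r <= c') /\
  (forall x, c - r <= x <= c + r -> f2 c / 2 < f2 x).

Lemma isolated_at_le c r r' : isolated_at r c -> 0 < r' <= r -> isolated_at r' c.
Proof.
  intros [H1 [H2 [H3 H4]]] Hr'. split; [lra | split; [lra | split]].
  - intros c' Hc' Hlt. specialize (H3 c' Hc' Hlt). lra.
  - intros x Hx. apply H4. lra.
Qed.

Lemma isolating_radius : exists r, 0 < r /\ forall c, In c m -> isolated_at r c.
Proof.
  apply finite_min_radius; [intros c r r' _; intros; eapply isolated_at_le; eassumption|].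
  intros c Hc. destruct (proj1 (In_m_iff c) Hc) as [Hcab [_ Hf2]].
  destruct (finite_min_radius m (fun c' r => c < c' -> c + 2 * r <= c')) as [r1 [Hr1 Hsep]].
  { intros x r r' _ Hr H Hlt. specialize (H Hlt). lra. }
  { intros c' _. destruct (Rlt_dec c c') as [Hlt|Hge].
    - exists ((c' - c) / 2). split; [lra | intros; lra].
    - exists 1. split; [lra | intros; contradiction]. }
  destruct (f2_cont c ltac:(lra) (f2 c / 2) ltac:(lra)) as [d [Hd Hcont]].
  set (r := Rmin (Rmin r1 ((c - a) / 2)) (Rmin ((b - c) / 2) (d / 2))).
  pose proof (Rmin_l (Rmin r1 ((c - a) / 2)) (Rmin ((b - c) / 2) (d / 2))).
  pose proof (Rmin_r (Rmin r1 ((c - a) / 2)) (Rmin ((b - c) / 2) (d / 2))).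
  pose proof (Rmin_l r1 ((c - a) / 2)). pose proof (Rmin_r r1 ((c - a) / 2)).
  pose proof (Rmin_l ((b - c) / 2) (d / 2)). pose proof (Rmin_r ((b - c) / 2) (d / 2)).
  assert (Hr : 0 < r) by (unfold r; repeat apply Rmin_glb_lt; lra).
  exists r. fold r in H, H0. split; [exact Hr|]. split; [lra | split; [lra | split]].
  - intros c' Hc' Hlt. specialize (Hsep c' Hc' Hlt). lra.
  - intros x Hx. assert (Hxc : Rabs (x - c) < d) by (apply Rabs_def1; lra).
    specialize (Hcont x ltac:(lra) Hxc). apply Rabs_def2 in Hcont. lra.
Qed.

(* Since f'' > 0 on [c - rho, c + rho] and f'(c) = 0, f' has a definite sign at c ± rho. *)
Lemma f1_sign_margin rho : 0 < rho -> (forall c, In c m -> isolated_at rho c) ->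
  exists k, 0 < k /\ forall c, In c m ->
    k <= f1 (c + rho) /\ k <= - f1 (c - rho) /\ k <= f2 c / 2.
Proof.
  intros Hrho Hiso. apply finite_min_radius; [intros; lra|].
  intros c Hc. destruct (proj1 (In_m_iff c) Hc) as [Hcab [E Hf2]].
  destruct (Hiso c Hc) as [Ha [Hb [_ Hpos]]].
  assert (Hinc : forall u v, c - rho <= u -> u < v -> v <= c + rho -> f1 u < f1 v).
  { intros u v Hu Huv Hv. apply (deriv_on_pos_increasing f1 f2 a b u v f_d2); try lra.
    intros x Hx. specialize (Hpos x ltac:(lra)). lra. }
  pose proof (Hinc c (c + rho) ltac:(lra) ltac:(lra) ltac:(lra)).
  pose proof (Hinc (c - rho) c ltac:(lra) ltac:(lra) ltac:(lra)).
  exists (Rmin (f1 (c + rho)) (Rmin (- f1 (c - rho)) (f2 c / 2))).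
  pose proof (Rmin_l (f1 (c + rho)) (Rmin (- f1 (c - rho)) (f2 c / 2))).
  pose proof (Rmin_r (f1 (c + rho)) (Rmin (- f1 (c - rho)) (f2 c / 2))).
  pose proof (Rmin_l (- f1 (c - rho)) (f2 c / 2)). pose proof (Rmin_r (- f1 (c - rho)) (f2 c / 2)).
  split; [repeat apply Rmin_glb_lt; lra | lra].
Qed.

(* Away from the minimizers f has no critical point with f'' >= 0 (at a and b,
   f' <> 0), so |f'| + (|f''| - f'') is bounded below there; the tents around the
   minimizers make the quantity positive on all of [a,b] so that the extreme value
   theorem applies. *)
Lemma far_from_m_bound rho : 0 < rho -> exists k, 0 < k /\ forall x, a <= x <= b ->
  (forall c, In c m -> rho <= Rabs (x - c)) -> k <= Rabs (f1 x) + (Rabs (f2 x) - f2 x).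
Proof.
  intros Hrho.
  assert (f1_cont : cont_on f1 a b) by exact (deriv_on_cont_on f1 f2 a b f_d2).
  set (tents x := sumR (map (fun c => Rmax 0 (rho - Rabs (x - c))) m)).
  set (G x := Rabs (f1 (clamp a b x)) + (Rabs (f2 (clamp a b x)) - f2 (clamp a b x)) + tents x).
  assert (HG : forall x, continuity_pt G x).
  { intros x. unfold G, tents.
    apply continuity_pt_plus; [apply continuity_pt_plus; [|apply continuity_pt_minus]|].
    - apply (continuity_pt_comp (fun y => f1 (clamp a b y)) Rabs);
        [apply continuity_pt_clamp; [lra | exact f1_cont] | apply Rcontinuity_abs].
    - apply (continuity_pt_comp (fun y => f2 (clamp a b y)) Rabs);
        [apply continuity_pt_clamp; [lra | exact f2_cont] | apply Rcontinuity_abs].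
    - apply continuity_pt_clamp; [lra | exact f2_cont].
    - apply (continuity_pt_sumR (fun c y => Rmax 0 (rho - Rabs (y - c)))).
      intros c. apply continuity_pt_tent. }
  destruct (continuity_ab_min G a b ltac:(lra) (fun c _ => HG c)) as [xm [Hmin Hxm]].
  assert (Htents : forall x, 0 <= tents x) by (intros x; apply sumR_ge0; intros; apply Rmax_l).
  exists (G xm). split.
  - unfold G. rewrite clamp_id by lra. pose proof (Htents xm).
    pose proof (Rabs_pos (f1 xm)). pose proof (Rle_abs (f2 xm)).
    destruct (Req_dec (f1 xm) 0) as [E|E]; [|pose proof (Rabs_pos_lt _ E); lra].
    assert (Hxm' : a < xm < b).
    { split; apply Rnot_le_lt; intros Hle;
        [replace xm with a in E by lra | replace xm with b in E by lra]; contradiction. }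
    pose proof (f_nondegenerate xm Hxm' E).
    destruct (Rlt_or_le (f2 xm) 0) as [Hneg|Hpos]; [rewrite (Rabs_left (f2 xm)) by lra; lra|].
    assert (Hin : In xm m) by (apply In_m_iff; repeat split; lra).
    pose proof (sumR_ge_term (fun c => Rmax 0 (rho - Rabs (xm - c))) m xm
                  (fun _ _ => Rmax_l _ _) Hin) as Hterm.
    cbv beta in Hterm. rewrite Rminus_diag, Rabs_R0, Rminus_0_r in Hterm.
    pose proof (Rmax_r 0 rho). fold (tents xm) in Hterm. lra.
  - intros x Hx Hfar. specialize (Hmin x Hx).
    unfold G at 2 in Hmin. rewrite clamp_id in Hmin by lra.
    assert (tents x <= 0).
    { unfold tents. eapply Rle_trans; [apply (sumR_le _ _ 0)|rewrite Rmult_0_r; lra].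
      intros c Hc. specialize (Hfar c Hc). unfold Rmax; destruct Rle_dec; lra. }
    lra.
Qed.

Variables (fh fh1 fh2 : nat -> R -> R).
Hypothesis fh_d1 : forall n, deriv_on (fh n) (fh1 n) a b.
Hypothesis fh_d2 : forall n, deriv_on (fh1 n) (fh2 n) a b.
Hypothesis fh1_conv : forall eps, 0 < eps -> exists N, forall n, (N <= n)%nat ->
  forall x, a <= x <= b -> Rabs (fh1 n x - f1 x) < eps.
Hypothesis fh2_conv : forall eps, 0 < eps -> exists N, forall n, (N <= n)%nat ->
  forall x, a <= x <= b -> Rabs (fh2 n x - f2 x) < eps.

Lemma local_minimizers_converge eta : 0 < eta -> exists N, forall n, (N <= n)%nat ->
  exists mh, Sorted Rlt mh /\ length mh = length m /\
    (forall x, In x mh <-> a < x < b /\ is_local_min (fh n) x) /\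
    forall i, (i < length m)%nat -> Rabs (nth i mh 0 - nth i m 0) < eta.
Proof.
  intros Heta.
  destruct isolating_radius as [r [Hr Hiso]].
  set (rho := Rmin r eta).
  assert (Hrho : 0 < rho) by (apply Rmin_glb_lt; lra).
  assert (Hrho_r : rho <= r) by apply Rmin_l.
  assert (Hrho_eta : rho <= eta) by apply Rmin_r.
  assert (Hiso' : forall c, In c m -> isolated_at rho c)
    by (intros c Hc; apply (isolated_at_le c r); auto; lra).
  destruct (f1_sign_margin rho Hrho Hiso') as [k2 [Hk2 Hmargin]].
  destruct (far_from_m_bound rho Hrho) as [k1 [Hk1 Hfar]].
  set (eps := Rmin (k1 / 3) k2).
  assert (Heps : 0 < eps) by (apply Rmin_glb_lt; lra).
  assert (Heps1 : eps <= k1 / 3) by apply Rmin_l.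
  assert (Heps2 : eps <= k2) by apply Rmin_r.
  destruct (fh1_conv eps Heps) as [N1 HN1]. destruct (fh2_conv eps Heps) as [N2 HN2].
  exists (Nat.max N1 N2). intros n Hn.
  specialize (HN1 n ltac:(lia)). specialize (HN2 n ltac:(lia)).
  destruct (local_minimizers_near a b (fh n) (fh1 n) (fh2 n) m rho (fh_d1 n) (fh_d2 n)
              m_sorted Hrho) as [mh [Hs [Hl [Hiff Hclose]]]].
  - intros c Hc. destruct (Hiso' c Hc) as [Ha [Hb [Hsep _]]]. auto.
  - intros c Hc. destruct (Hiso' c Hc) as [Ha [Hb _]].
    destruct (Hmargin c Hc) as [Hright [Hleft _]].
    pose proof (HN1 (c - rho) ltac:(lra)) as Hl. pose proof (HN1 (c + rho) ltac:(lra)) as Hu.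
    apply Rabs_def2 in Hl. apply Rabs_def2 in Hu. lra.
  - intros c Hc x Hx.
    destruct (Hiso' c Hc) as [Ha [Hb [_ Hf2]]]. destruct (Hmargin c Hc) as [_ [_ Hk2c]].
    specialize (Hf2 x Hx). specialize (HN2 x ltac:(lra)). apply Rabs_def2 in HN2. lra.
  - (* a local minimizer x of fh n has fh1 n x = 0 and fh2 n x >= 0, which forces
       |f1 x| + (|f2 x| - f2 x) < 3 eps <= k1 *)
    intros x Hx Hmin. apply NNPP. intros Hno.
    assert (Hfar_x : forall c, In c m -> rho <= Rabs (x - c))
      by (intros c Hc; apply Rnot_lt_le; intros Hlt; apply Hno; exists c; auto).
    specialize (Hfar x ltac:(lra) Hfar_x).
    pose proof (local_min_deriv_eq0 _ _ a b x (fh_d1 n) Hx Hmin) as E1.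
    pose proof (local_min_deriv2_ge0 _ _ _ a b x (fh_d1 n) (fh_d2 n) Hx Hmin) as E2.
    specialize (HN1 x ltac:(lra)). specialize (HN2 x ltac:(lra)).
    rewrite E1, Rminus_0_l, Rabs_Ropp in HN1. apply Rabs_def2 in HN2.
    revert Hfar. unfold Rabs at 2. destruct Rcase_abs; intros; lra.
  - exists mh. split; [exact Hs | split; [exact Hl | split; [exact Hiff |]]].
    intros i Hi. specialize (Hclose i Hi). lra.
Qed.

End Density.

Theorem mainTheorem3
  (a b : R) (f f1 f2 f3 : R -> R)
  (fh fh1 fh2 : nat -> R -> R) (m : list R)
  (Hab : a < b)
  (Hfpos : forall x, 0 <= f x)
  (Hfout : forall x, (x < a \/ b < x) -> f x = 0)
  (Hf1 : Prob f a b (fun _ => True) = 1)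
  (Hd1 : deriv_on f f1 a b) (Hd2 : deriv_on f1 f2 a b)
  (Hd3 : deriv_on f2 f3 a b) (Hc3 : cont_on f3 a b)
  (Hfa : f1 a <> 0) (Hfb : f1 b <> 0)
  (Hcrit_fin : exists l : list R, forall x, a < x < b -> f1 x = 0 -> In x l)
  (Hcrit_nd : forall x, a < x < b -> f1 x = 0 -> f2 x <> 0)
  (Hm_sorted : Sorted Rlt m)
  (Hm : forall x, In x m <-> (a < x < b /\ is_local_min f x))
  (Hhd1 : forall n, deriv_on (fh n) (fh1 n) a b)
  (Hhd2 : forall n, deriv_on (fh1 n) (fh2 n) a b)
  (Hhc2 : forall n, cont_on (fh2 n) a b)
  (Hconv1 : forall eps, 0 < eps -> exists N, forall n, (N <= n)%nat ->
              forall x, a <= x <= b -> Rabs (fh1 n x - f1 x) < eps)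
  (Hconv2 : forall eps, 0 < eps -> exists N, forall n, (N <= n)%nat ->
              forall x, a <= x <= b -> Rabs (fh2 n x - f2 x) < eps) :
  exists n0 : nat, forall n, (n0 <= n)%nat ->
    exists mh : list R,
      Sorted Rlt mh /\ length mh = length m /\
      (forall x, In x mh <-> (a < x < b /\ is_local_min (fh n) x)) /\
      dP f a b (modal_clustering mh) (modal_clustering m) =
        sumR (map (fun p => Rabs (distr_fun f a b (fst p) - distr_fun f a b (snd p)))
                  (combine mh m)).
Proof.
  assert (Hc2 : cont_on f2 a b) by exact (deriv_on_cont_on f2 f3 a b Hd3).
  destruct (dP_modal_near a b f f1 f2 m Hab Hfpos Hd1 Hd2 Hcrit_nd Hm_sorted Hm)
    as [eta [Heta Hnear]].
  destruct (local_minimizers_converge a b f f1 f2 m Hab Hd1 Hd2 Hc2 Hfa Hfb Hcrit_nd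
              Hm_sorted Hm fh fh1 fh2 Hhd1 Hhd2 Hconv1 Hconv2 eta Heta) as [N HN].
  exists N. intros n Hn. destruct (HN n Hn) as [mh [Hs [Hl [Hiff Hclose]]]].
  exists mh. split; [exact Hs | split; [exact Hl | split; [exact Hiff |]]].
  apply Hnear; [exact Hl | | exact Hclose]. intros x Hx. apply Hiff, Hx.
Qed.
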